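(* Let $\Omega\subset\mathbb{R}^N$ be open, let $\Phi,\Psi$ be Young functions satisfying $\Delta_2$ with $\tilde\Phi,\Psi\in\Delta'$, and let $g\in L^1_{\mathrm{loc}}(\Omega)$, $g\ge0$. If there is $C_1>0$ such that $\|u\|_{L^{\Psi,g}(\Omega)}\le C_1\|\nabla u\|_{L^\Phi(\Omega)}$ for all $u\in\mathcal{C}^1_c(\Omega)$, then there exists $C_2=C_2(\Phi,\Psi)>0$ such that \[ \Psi^{-1}\!\left(\int_\Omega g\,\Psi(|u|)\,dx\right)\le C_2C_1\,\Phi^{-1}\!\left(\int_\Omega\Phi(|\nabla u|)\,dx\right)\qquad\forall u\in\mathcal{C}^1_c(\Omega). \]
   Context: A Young function is $\Phi(t)=\int_0^t\varphi(s)\,ds$ with $\varphi$ increasing, right continuous, $\varphi(t)=0$ iff $t=0$; $\tilde\Phi(t)=\sup_{s>0}\{st-\Phi(s)\}$. $\Delta_2$: $\Phi(2t)\le C\Phi(t)$ for all $t\ge0$; $\Delta'$: $\Phi(st)\le C\Phi(s)\Phi(t)$ for all $s,t\ge0$ (some $C>1$). $\|u\|_{L^{\Psi,g}(\Omega)}=\inf\{\lambda>0:\int_\Omega\Psi(|u|/\lambda)g\,dx\le1\}$ and $\|\nabla u\|_{L^\Phi(\Omega)}=\inf\{\lambda>0:\int_\Omega\Phi(|\nabla u|/\lambda)dx\le1\}$ (Luxemburg norms). *)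

From HB Require Import structures.
From mathcomp Require Import all_boot all_order all_algebra.
From mathcomp Require Import all_classical all_reals all_analysis.
From mathcomp Require Import measurable_realfun.

Set Implicit Arguments.
Unset Strict Implicit.
Unset Printing Implicit Defensive.

Import Order.TTheory GRing.Theory Num.Theory.
Import numFieldNormedType.Exports.

Local Open Scope classical_set_scope.
Local Open Scope ring_scope.

Section Defs.
Variable R : realType.

Definition young (Phi : R -> R) : Prop :=
  exists phi : R -> R,
    (forall s t, 0 <= s -> s <= t -> phi s <= phi t) /\
    (forall t, 0 <= t -> phi x @[x --> t^'+] --> phi t) /\
    (forall t, 0 <= t -> (phi t = 0 <-> t = 0)) /\
    (forall t, 0 <= t ->
       (Phi t)%:E = (\int[@lebesgue_measure R]_(s in `[0%R, t]) (phi s)%:E)%E).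

Definition young_conj (Phi : R -> R) (t : R) : \bar R :=
  ereal_sup [set (s * t - Phi s)%:E | s in `]0, +oo[].

Definition Delta2 (Phi : R -> R) : Prop :=
  exists C : R, 1 < C /\ forall t, 0 <= t -> Phi (2 * t) <= C * Phi t.

Definition Deltap (Phi : R -> R) : Prop :=
  exists C : R, 1 < C /\
    forall s t, 0 <= s -> 0 <= t -> Phi (s * t) <= C * Phi s * Phi t.

Definition young_inv (Phi : R -> R) (y : R) : R :=
  sup [set t | 0 <= t /\ Phi t <= y].

Definition young_einv (Phi : R -> R) (y : \bar R) : \bar R :=
  match y with
  | r%:E => (young_inv Phi r)%:E
  | +oo%E => +oo%E
  | -oo%E => 0%E
  end.

(* iterated Lebesgue integral over R^n of a function of n real variables;
   by Tonelli this is the Lebesgue integral on R^n for nonnegative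
   (product-/Borel-) measurable integrands *)
Fixpoint lint (n : nat) : (n.-tuple R -> \bar R) -> \bar R :=
  match n with
  | 0 => fun f => f [tuple]
  | n'.+1 => fun f =>
      (\int[@lebesgue_measure R]_x lint (fun t : n'.-tuple R => f [tuple of x :: t]))%E
  end.

Definition rowt (n : nat) (t : n.-tuple R) : 'rV[R]_n := \row_i tnth t i.

Definition ext0 (n : nat) (D : set 'rV[R]_n) (f : 'rV[R]_n -> \bar R) (x : 'rV[R]_n) : \bar R :=
  if `[< D x >] then f x else 0%E.

Definition intRN (n : nat) (D : set 'rV[R]_n) (f : 'rV[R]_n -> \bar R) : \bar R :=
  lint (fun t => ext0 D f (rowt t)).

Definition L1loc (n : nat) (Omega : set 'rV[R]_n) (g : 'rV[R]_n -> R) : Prop :=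
  measurable_fun [set: n.-tuple R]
    ((fun t => ext0 Omega (fun x => (g x)%:E) (rowt t)) : n.-tuple R -> \bar R) /\
  forall K : set 'rV[R]_n, compact K -> K `<=` Omega ->
    (intRN K (fun x => (`|g x|)%:E) < +oo)%E.

Definition unit_vec (n : nat) (i : 'I_n) : 'rV[R]_n := delta_mx 0 i.

Definition partial (n : nat) (u : 'rV[R]_n -> R) (i : 'I_n) (x : 'rV[R]_n) : R :=
  'D_(unit_vec i) u x.

Definition grad_norm (n : nat) (u : 'rV[R]_n -> R) (x : 'rV[R]_n) : R :=
  Num.sqrt (\sum_(i < n) (partial u i x) ^+ 2).

Definition C1c (n : nat) (Omega : set 'rV[R]_n) (u : 'rV[R]_n -> R) : Prop :=
  (forall x, Omega x -> differentiable u x) /\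
  (forall i x, Omega x -> {for x, continuous (partial u i)}) /\
  compact (closure [set x | Omega x /\ u x <> 0]) /\
  closure [set x | Omega x /\ u x <> 0] `<=` Omega.

Definition lux_weighted (n : nat) (Psi : R -> R) (Omega : set 'rV[R]_n)
    (g : 'rV[R]_n -> R) (u : 'rV[R]_n -> R) : \bar R :=
  ereal_inf [set lam%:E | lam in
    [set lam : R | 0 < lam /\
       (intRN Omega (fun x => (Psi (`|u x| / lam) * g x)%:E) <= 1)%E]].

Definition lux_grad (n : nat) (Phi : R -> R) (Omega : set 'rV[R]_n)
    (u : 'rV[R]_n -> R) : \bar R :=
  ereal_inf [set lam%:E | lam in
    [set lam : R | 0 < lam /\
       (intRN Omega (fun x => (Phi (grad_norm u x / lam))%:E) <= 1)%E]].

End Defs.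

(* Let b = \int Phi(|grad u|) and s = Phi^-1(b).  Young's inequality
   x t <= Phi(x) + ~Phi(t), taken at t = phi(a) phi(b), together with the
   Delta' condition on ~Phi and ~Phi(phi(a)) <= a phi(a), makes Phi
   supermultiplicative: Phi(a) Phi(b) <= Phi((K + 1) a b).  Hence
   \int Phi(|grad u| / ((K + 1) s')) <= b / Phi(s') < 1 for every s' > s, that is
   ||grad u||_Phi <= (K + 1) s.  On the other side, if ||u||_{Psi,g} < lam, the
   Delta' condition on Psi bounds \int g Psi(|u|) by K' Psi(lam) <= Psi(K' lam),
   so Psi^-1(\int g Psi(|u|)) <= K' lam.  Chaining both through the assumed
   inequality gives the claim with C2 = K' (K + 1). *)

From HB Require Import structures.
From mathcomp Require Import all_boot all_order all_algebra.
From mathcomp Require Import all_classical all_reals all_analysis.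
From mathcomp Require Import measurable_realfun.
From mathcomp Require Import ring lra.

Import Order.TTheory GRing.Theory Num.Theory.
Import numFieldNormedType.Exports.

Local Open Scope classical_set_scope.
Local Open Scope ring_scope.

Section ge0_integralT.
Local Open Scope ereal_scope.
Context d (T : measurableType d) (R : realType) (mu : {measure set T -> \bar R}).
Import HBNNSimple.

(* No measurability is assumed: the integral of a nonnegative function is the
   supremum of the integrals of the simple functions below it. *)
Lemma ge0_le_integralT (f g : T -> \bar R) : (forall x, 0 <= f x) ->
  (forall x, f x <= g x) -> \int[mu]_x f x <= \int[mu]_x g x.
Proof.
move=> f0 fg; rewrite !ge0_integralTE//; last by move=> x; exact: le_trans (fg x).
by apply: ereal_sup_le => _ [h hf <-]; exists h => // x; exact: le_trans (fg x).
Qed.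

Let ge0_integralZlT_le (k : R) (f : T -> \bar R) : (0 < k)%R ->
  (forall x, 0 <= f x) -> \int[mu]_x (k%:E * f x) <= k%:E * \int[mu]_x f x.
Proof.
move=> k0 f0; rewrite !ge0_integralTE//; last by move=> x; rewrite mule_ge0// lee_fin ltW.
apply: ge_ereal_sup => _ [h hk <-].
have ki0 : (0 <= k^-1)%R by rewrite invr_ge0 ltW.
have -> : sintegral mu h = k%:E * sintegral mu (scale_nnsfun h ki0).
  by rewrite sintegralrM muleA -EFinM divff ?gt_eqF ?mul1e.
rewrite lee_pmul2l//; apply: ereal_sup_ubound; exists (scale_nnsfun h ki0) => // x /=.
by rewrite EFinM -(@lee_pmul2l _ k%:E)// muleA -EFinM divff ?gt_eqF// mul1r.
Qed.

Lemma ge0_integralZlT (k : R) (f : T -> \bar R) : (0 < k)%R ->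
  (forall x, 0 <= f x) -> \int[mu]_x (k%:E * f x) = k%:E * \int[mu]_x f x.
Proof.
move=> k0 f0; apply/eqP; rewrite eq_le ge0_integralZlT_le//=.
have kf0 x : 0 <= k%:E * f x by rewrite mule_ge0// lee_fin ltW.
have ki0 : (0 < k^-1)%R by rewrite invr_gt0.
rewrite -(@lee_pmul2l _ k^-1%:E)// muleA -EFinM mulVf ?gt_eqF// mul1e.
have := ge0_integralZlT_le _ _ ki0 kf0.
by under eq_integral do rewrite muleA -EFinM mulVf ?gt_eqF// mul1e.
Qed.

End ge0_integralT.

Section iterated_integral.
Local Open Scope ereal_scope.
Context (R : realType).

Lemma lint_ge0 n (f : n.-tuple R -> \bar R) : (forall t, 0 <= f t) -> 0 <= lint f.
Proof.
elim: n f => [|n IH] f f0 /=; first exact: f0.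
by apply: integral_ge0 => x _; apply: IH.
Qed.

Lemma ge0_le_lint n (f g : n.-tuple R -> \bar R) : (forall t, 0 <= f t) ->
  (forall t, f t <= g t) -> lint f <= lint g.
Proof.
elim: n f g => [|n IH] f g f0 fg /=; first exact: fg.
by apply: ge0_le_integralT => x; [exact: lint_ge0|exact: IH].
Qed.

Lemma ge0_lintZl n (k : R) (f : n.-tuple R -> \bar R) : (0 < k)%R ->
  (forall t, 0 <= f t) -> lint (fun t => k%:E * f t) = k%:E * lint f.
Proof.
move=> k0; elim: n f => [|n IH] f f0 //=.
under eq_integral do rewrite IH//.
by apply: ge0_integralZlT => // x; exact: lint_ge0.
Qed.

Variable n : nat.
Implicit Types (D : set 'rV[R]_n) (f g : 'rV[R]_n -> \bar R).

Let ext0_ge0 D f x : (forall x, D x -> 0 <= f x) -> 0 <= ext0 D f x.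
Proof. by move=> f0; rewrite /ext0; case: asboolP => // /f0. Qed.

Lemma intRN_ge0 D f : (forall x, D x -> 0 <= f x) -> 0 <= intRN D f.
Proof. by move=> f0; apply: lint_ge0 => t; exact: ext0_ge0. Qed.

Lemma ge0_le_intRN D f g : (forall x, D x -> 0 <= f x) ->
  (forall x, D x -> f x <= g x) -> intRN D f <= intRN D g.
Proof.
move=> f0 fg; apply: ge0_le_lint => [t|t]; first exact: ext0_ge0.
by rewrite /ext0; case: asboolP => // /fg.
Qed.

Lemma ge0_intRNZl D (k : R) f : (0 < k)%R -> (forall x, D x -> 0 <= f x) ->
  intRN D (fun x => k%:E * f x) = k%:E * intRN D f.
Proof.
move=> k0 f0; rewrite /intRN -ge0_lintZl//; last by move=> t; exact: ext0_ge0.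
by congr lint; apply: funext => t; rewrite /ext0; case: asboolP; rewrite ?mule0.
Qed.

End iterated_integral.

Section young_function.
Context {R : realType} {Phi phi : R -> R}.
Hypothesis phi_nd : forall s t, 0 <= s -> s <= t -> phi s <= phi t.
Hypothesis phi_eq0 : forall t, 0 <= t -> (phi t = 0 <-> t = 0).
Hypothesis Phi_int : forall t, 0 <= t ->
  (Phi t)%:E = (\int[@lebesgue_measure R]_(s in `[0%R, t]) (phi s)%:E)%E.

Lemma phi_ge0 {t} : 0 <= t -> 0 <= phi t.
Proof. by move=> t0; rewrite -(phi_eq0 _ (lexx 0)).2// phi_nd. Qed.

Lemma phi_gt0 {t} : 0 < t -> 0 < phi t.
Proof.
move=> t0; rewrite lt_neqAle eq_sym phi_ge0 ?ltW// andbT.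
by apply/eqP => /(phi_eq0 _ (ltW t0)) t_eq0; rewrite t_eq0 ltxx in t0.
Qed.

(* phi is only monotone on [0, +oo); extended by phi 0 on the left it becomes
   monotone, hence measurable, on the whole line. *)
Let phi_ext x := phi (Num.max x 0).

Let mphi_ext (D : set R) : measurable D -> measurable_fun D (EFin \o phi_ext).
Proof.
move=> mD; apply/measurable_EFinP; apply: nondecreasing_measurable => // x y xy.
apply: phi_nd; first by rewrite le_max lexx orbT.
by rewrite ge_max !le_max xy lexx orbT.
Qed.

Let phi_ext_ge0 x : 0 <= phi_ext x.
Proof. by rewrite phi_ge0// le_max lexx orbT. Qed.

Let Phi_int_ext t : 0 <= t ->
  (Phi t)%:E = (\int[@lebesgue_measure R]_(s in `[0%R, t]) (phi_ext s)%:E)%E.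
Proof.
move=> t0; rewrite Phi_int//; apply: eq_integral => s.
by rewrite inE/= in_itv/= => /andP[s0 _]; rewrite /phi_ext max_l.
Qed.

Let integral_cst_itv (b : bool) (s r c : R) : s <= r ->
  (\int[@lebesgue_measure R]_(x in [set` Interval (BSide b s) (BRight r)]) c%:E)%E
  = ((r - s) * c)%:E.
Proof.
rewrite integral_cst//= lebesgue_measure_itv/= lte_fin le_eqVlt => /predU1P[->|->].
  by rewrite ltxx subrr mul0r mule0.
by rewrite -EFinD -EFinM mulrC.
Qed.

Let integral_phi_ext_ge (b : bool) (s r : R) : 0 <= s -> s <= r ->
  (((r - s) * phi s)%:E <=
   \int[@lebesgue_measure R]_(x in [set` Interval (BSide b s) (BRight r)]) (phi_ext x)%:E)%E.
Proof.
move=> s0 sr; rewrite -(integral_cst_itv b)//.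
apply: ge0_le_integral => //=; first by move=> x _; rewrite lee_fin phi_ge0.
  exact: mphi_ext.
move=> x; rewrite in_itv/= => /andP[sx xr]; have sx' : s <= x by case: b sx => // /ltW.
by rewrite lee_fin /phi_ext max_l ?phi_nd// (le_trans s0).
Qed.

Lemma Phi_tangent_le {s r} : 0 <= s -> s <= r -> Phi s + (r - s) * phi s <= Phi r.
Proof.
move=> s0 sr; have r0 := le_trans s0 sr.
rewrite -lee_fin EFinD !Phi_int_ext//.
rewrite (@itv_bndbnd_setU _ _ (BLeft 0) (BRight s) (BRight r))//.
have disj : [disjoint `[0, s] & `]s, r]].
  apply/disj_setPS => x []/=; rewrite !in_itv/= => /andP[_ xs] /andP[sx _].
  by move: (lt_le_trans sx xs); rewrite ltxx.
rewrite (ge0_integral_setU (@lebesgue_measure R) (measurable_itv _) (measurable_itv _) _ _ disj).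
- by rewrite leeD2l//; exact: integral_phi_ext_ge.
- by apply: mphi_ext; exact: measurableU.
- by move=> x _; rewrite lee_fin.
Qed.

Lemma Phi_le_mul_phi {t} : 0 <= t -> Phi t <= t * phi t.
Proof.
move=> t0; rewrite -lee_fin Phi_int_ext// -[t in (t * _)%:E]subr0 -(integral_cst_itv true)//.
apply: ge0_le_integral => //=; first by move=> x _; rewrite lee_fin.
  exact: mphi_ext.
by move=> x; rewrite in_itv/= => /andP[x0 xt]; rewrite lee_fin /phi_ext max_l// phi_nd.
Qed.

Lemma Phi_ge0 {t} : 0 <= t -> 0 <= Phi t.
Proof.
move=> t0; rewrite -lee_fin Phi_int_ext//.
by apply: integral_ge0 => x _; rewrite lee_fin.
Qed.

Lemma Phi0 : Phi 0 = 0.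
Proof.
by apply/le_anti; rewrite Phi_ge0// andbT (le_trans (Phi_le_mul_phi (lexx 0)))// mul0r.
Qed.

Lemma Phi_gt0 {t} : 0 < t -> 0 < Phi t.
Proof.
move=> t0; have t2_gt0 : 0 < t / 2 by rewrite divr_gt0.
have t2_le : t / 2 <= t by rewrite ler_pdivrMr// ler_pMr// ler1n.
apply: lt_le_trans (Phi_tangent_le (ltW t2_gt0) t2_le).
by rewrite {2}(splitr t) addrK ltr_wpDl ?Phi_ge0 ?ltW// mulr_gt0 ?phi_gt0.
Qed.

Lemma lt_Phi {s r} : 0 <= s -> s < r -> Phi s < Phi r.
Proof.
move=> s0 sr; have [s_eq0|s_neq0] := eqVneq s 0.
  by rewrite s_eq0 Phi0 Phi_gt0// -s_eq0.
apply: lt_le_trans (Phi_tangent_le s0 (ltW sr)).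
by rewrite ltrDl mulr_gt0 ?subr_gt0 ?phi_gt0// lt_neqAle eq_sym s_neq0.
Qed.

Lemma Phi_scale_ge {K t} : 1 <= K -> 0 <= t -> K * Phi t <= Phi (K * t).
Proof.
move=> K1 t0; have tKt : t <= K * t by rewrite ler_peMl.
apply: le_trans (Phi_tangent_le t0 tKt).
have : (K - 1) * Phi t <= (K - 1) * (t * phi t).
  by rewrite ler_wpM2l ?subr_ge0// Phi_le_mul_phi.
lra.
Qed.

Lemma young_inv_ub b : has_ubound [set t | 0 <= t /\ Phi t <= b].
Proof.
have phi1_gt0 := phi_gt0 ltr01.
exists (1 + `|b| / phi 1) => t [t0 Ptb]; have [t_le1|t_gt1] := leP t 1.
  by rewrite (le_trans t_le1)// lerDl divr_ge0// ltW.
rewrite -lerBlDl ler_pdivlMr//.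
have := Phi_tangent_le ler01 (ltW t_gt1); have := Phi_ge0 ler01; have := ler_norm b.
lra.
Qed.

Lemma young_inv_ge0 {b} : 0 <= b -> 0 <= young_inv Phi b.
Proof. by move=> b0; apply: ub_le_sup; [exact: young_inv_ub|rewrite /= Phi0]. Qed.

Lemma young_inv_lt {b s} : 0 <= b -> young_inv Phi b < s -> b < Phi s.
Proof.
move=> b0 bs; rewrite ltNge; apply/negP => Psb.
have s_ge0 : 0 <= s := le_trans (young_inv_ge0 b0) (ltW bs).
have : s <= young_inv Phi b by apply: ub_le_sup; [exact: young_inv_ub|split].
by rewrite leNgt bs.
Qed.

Lemma young_inv_le_scale K lam a : 1 <= K -> 0 < lam -> 0 <= a ->
  a <= K * Phi lam -> young_inv Phi a <= K * lam.
Proof.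
move=> K1 lam_gt0 a0 aK; apply: ge_sup => [|t [t0 Pta]].
  by exists 0; split; rewrite /= ?Phi0.
have Klam_ge0 : 0 <= K * lam := mulr_ge0 (le_trans ler01 K1) (ltW lam_gt0).
rewrite leNgt; apply/negP => /(lt_Phi Klam_ge0).
have := Phi_scale_ge K1 (ltW lam_gt0); lra.
Qed.

Lemma young_conj_ge x t : 0 < x -> ((x * t - Phi x)%:E <= young_conj Phi t)%E.
Proof. by move=> x0; apply: ereal_sup_ubound; exists x; rewrite /= ?in_itv/= ?x0. Qed.

Lemma young_conj_phi_le a : 0 <= a -> (young_conj Phi (phi a) <= (a * phi a)%:E)%E.
Proof.
move=> a0; apply: ge_ereal_sup => _ [x + <-]; rewrite /= in_itv/= andbT => x0.
rewrite lee_fin; have pa0 := phi_ge0 a0; have [xa|ax] := leP x a.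
  have := Phi_ge0 (ltW x0); have : x * phi a <= a * phi a by rewrite ler_wpM2r.
  lra.
have := Phi_tangent_le a0 (ltW ax); have := Phi_ge0 a0; nra.
Qed.

Lemma young_conj_ge0 t : 0 <= t -> (0 <= young_conj Phi t)%E.
Proof.
move=> t0; apply/lee_addgt0Pr => e e0.
have phi1_gt0 := phi_gt0 ltr01.
pose x := Num.min 1 (e / phi 1).
have x0 : 0 < x by rewrite lt_min ltr01 divr_gt0.
have Px : Phi x <= e.
  apply: le_trans (Phi_le_mul_phi (ltW x0)) _.
  apply: le_trans (_ : x * phi 1 <= e).
    apply: ler_wpM2l; [exact: ltW|apply: phi_nd; [exact: ltW|rewrite ge_min lexx//]].
  by rewrite -ler_pdivlMr// ge_min lexx orbT.
apply: le_trans (_ : ((x * t - Phi x)%:E + e%:E <= _)%E); last first.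
  by rewrite leeD2r// young_conj_ge.
by rewrite -EFinD lee_fin; have := mulr_ge0 (ltW x0) t0; lra.
Qed.

Lemma Phi_supermul {K} :
  (forall t, 0 <= t -> young_conj Phi t \is a fin_num) ->
  (forall s t, 0 <= s -> 0 <= t -> fine (young_conj Phi (s * t))
     <= K * fine (young_conj Phi s) * fine (young_conj Phi t)) ->
  0 <= K -> forall a b, 0 <= a -> 0 <= b -> Phi a * Phi b <= Phi ((K + 1) * a * b).
Proof.
move=> conj_fin conjK K0 a b a0 b0.
have [->|a_neq0] := eqVneq a 0; first by rewrite Phi0 !(mul0r, mulr0) Phi0.
have [->|b_neq0] := eqVneq b 0; first by rewrite Phi0 !(mul0r, mulr0) Phi0.
set F := fun t => fine (young_conj Phi t).
have F_ge0 t : 0 <= t -> 0 <= F t.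
  by move=> t0; rewrite -lee_fin fineK ?conj_fin// young_conj_ge0.
have F_phi c : 0 <= c -> F (phi c) <= c * phi c.
  by move=> c0; rewrite -lee_fin fineK ?conj_fin ?phi_ge0// young_conj_phi_le.
have pa0 := phi_ge0 a0; have pb0 := phi_ge0 b0.
set x := (K + 1) * a * b; set Q := (a * phi a) * (b * phi b).
have x_gt0 : 0 < x by rewrite !mulr_gt0 ?lt_neqAle 1?eq_sym ?a_neq0 ?b_neq0//; lra.
have young : (K + 1) * Q - Phi x <= F (phi a * phi b).
  rewrite -lee_fin fineK ?conj_fin ?mulr_ge0//.
  by rewrite (_ : (K + 1) * Q = x * (phi a * phi b)) ?young_conj_ge// /x /Q; ring.
have FF : K * (F (phi a) * F (phi b)) <= K * Q.
  by rewrite ler_wpM2l// ler_pM ?F_ge0 ?F_phi.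
have PP : Phi a * Phi b <= Q by rewrite ler_pM ?Phi_ge0 ?Phi_le_mul_phi.
have := conjK _ _ pa0 pb0; rewrite -/(F _) -/(F _) -/(F _) mulrA in FF *.
lra.
Qed.

Section luxemburg.
Context {n : nat} {Omega : set 'rV[R]_n}.

Lemma lux_grad_le_young_inv {c u b} : 0 < c ->
  (forall s t, 0 <= s -> 0 <= t -> Phi s * Phi t <= Phi (c * s * t)) ->
  intRN Omega (fun x => (Phi (grad_norm u x))%:E) = b%:E ->
  (lux_grad Phi Omega u <= (c * young_inv Phi b)%:E)%E.
Proof.
move=> c_gt0 Phi_mul modular_b.
have b0 : 0 <= b.
  by rewrite -lee_fin -modular_b intRN_ge0// => x _; rewrite lee_fin Phi_ge0 ?sqrtr_ge0.
apply/lee_addgt0Pr => e e0; set s := young_inv Phi b + e / c.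
have s_gt : young_inv Phi b < s by rewrite ltrDl divr_gt0.
have s_gt0 : 0 < s := le_lt_trans (young_inv_ge0 b0) s_gt.
have -> : ((c * young_inv Phi b)%:E + e%:E = (c * s)%:E)%E.
  by rewrite /s mulrDr -EFinD mulrCA mulfV ?gt_eqF// mulr1.
apply: ereal_inf_lbound; exists (c * s) => //; split; first by rewrite mulr_gt0.
have Phis_gt0 := Phi_gt0 s_gt0; have cs_gt0 : 0 < c * s by rewrite mulr_gt0.
have ratio_ge0 x : 0 <= grad_norm u x / (c * s) by rewrite divr_ge0 ?sqrtr_ge0 ?ltW.
rewrite -(@lee_pmul2l _ (Phi s)%:E) ?lte_fin// mule1 -ge0_intRNZl//; last first.
  by move=> x _; rewrite lee_fin; exact: Phi_ge0.
apply: (@le_trans _ _ b%:E)%E; last by rewrite lee_fin ltW// young_inv_lt.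
rewrite -modular_b; apply: ge0_le_intRN => x _.
  by rewrite -EFinM lee_fin (mulr_ge0 (Phi_ge0 (ltW s_gt0)) (Phi_ge0 (ratio_ge0 x))).
rewrite -EFinM lee_fin; apply: le_trans (Phi_mul _ _ (ltW s_gt0) (ratio_ge0 x)) _.
by rewrite mulrC divfK ?gt_eqF.
Qed.

Lemma weighted_modular_le {K g u lam} : 0 < K ->
  (forall s t, 0 <= s -> 0 <= t -> Phi (s * t) <= K * Phi s * Phi t) ->
  (forall x, Omega x -> 0 <= g x) ->
  (lux_weighted Phi Omega g u < lam%:E)%E ->
  (intRN Omega (fun x => (g x * Phi `|u x|)%:E) <= (K * Phi lam)%:E)%E.
Proof.
move=> K_gt0 PhiK g0 lux_lt.
have [_ [mu [mu_gt0 modular_mu] <-]] := ereal_inf_lt lux_lt; rewrite lte_fin => mu_lt.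
have ratio_ge0 x : 0 <= `|u x| / mu by rewrite divr_ge0// ltW.
have KPmu_gt0 : 0 < K * Phi mu by rewrite mulr_gt0// Phi_gt0.
apply: (@le_trans _ _ ((K * Phi mu)%:E *
    intRN Omega (fun x => (Phi (`|u x| / mu) * g x)%:E))%E).
  rewrite -ge0_intRNZl//; last by move=> x Ox; rewrite lee_fin mulr_ge0 ?g0 ?Phi_ge0.
  apply: ge0_le_intRN => x Ox; first by rewrite lee_fin mulr_ge0 ?g0 ?Phi_ge0.
  rewrite -EFinM lee_fin mulrC mulrA ler_wpM2r ?g0//.
  rewrite -[X in Phi X](divfK (lt0r_neq0 mu_gt0)) mulrC.
  exact: PhiK _ _ (ltW mu_gt0) (ratio_ge0 x).
apply: le_trans (lee_wpmul2l _ modular_mu) _; first by rewrite lee_fin ltW.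
by rewrite mule1 lee_fin ler_wpM2l ?(ltW K_gt0)// ltW// (lt_Phi (ltW mu_gt0)).
Qed.

Lemma young_einv_weighted_le {K g u M} : 1 <= K ->
  (forall s t, 0 <= s -> 0 <= t -> Phi (s * t) <= K * Phi s * Phi t) ->
  (forall x, Omega x -> 0 <= g x) -> 0 <= M ->
  (lux_weighted Phi Omega g u <= M%:E)%E ->
  (young_einv Phi (intRN Omega (fun x => (g x * Phi `|u x|)%:E)) <= (K * M)%:E)%E.
Proof.
move=> K1 PhiK g0 M0 lux_le; have K_gt0 : 0 < K := lt_le_trans ltr01 K1.
have modular_le lam : M < lam ->
    (intRN Omega (fun x => (g x * Phi `|u x|)%:E) <= (K * Phi lam)%:E)%E.
  by move=> M_lt; apply: weighted_modular_le => //; rewrite (le_lt_trans lux_le).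
have M_lt : M < M + 1 by rewrite ltrDl.
have := modular_le _ M_lt; have : (0 <= intRN Omega (fun x => (g x * Phi `|u x|)%:E))%E.
  by apply: intRN_ge0 => x Ox; rewrite lee_fin mulr_ge0 ?g0 ?Phi_ge0.
case: (intRN _ _) modular_le => [a| |]// modular_le; rewrite lee_fin => a0 _ /=.
rewrite lee_fin; apply/ler_addgt0Pr => e e0.
have eK_gt0 : 0 < e / K by rewrite divr_gt0.
have -> : K * M + e = K * (M + e / K).
  by rewrite mulrDr mulrCA mulfV ?lt0r_neq0// mulr1.
apply: young_inv_le_scale => //; first exact: ltr_wpDl M0 eK_gt0.
by rewrite -lee_fin; apply: modular_le; rewrite ltrDl.
Qed.
End luxemburg.

End young_function.

Theorem lemma3p1 (R : realType) (Phi Psi : R -> R) :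
  young Phi -> young Psi -> Delta2 Phi -> Delta2 Psi ->
  (forall t : R, 0 <= t -> young_conj Phi t \is a fin_num) ->
  Deltap (fun t => fine (young_conj Phi t)) ->
  Deltap Psi ->
  exists C2 : R, 0 < C2 /\
    forall (N : nat) (Omega : set 'rV[R]_N) (g : 'rV[R]_N -> R) (C1 : R),
      open Omega ->
      L1loc Omega g ->
      (forall x, Omega x -> 0 <= g x) ->
      0 < C1 ->
      (forall u, C1c Omega u ->
         (lux_weighted Psi Omega g u <= C1%:E * lux_grad Phi Omega u)%E) ->
      forall u, C1c Omega u ->
        (young_einv Psi (intRN Omega (fun x => (g x * Psi `|u x|)%:E))
         <= (C2 * C1)%:E *
            young_einv Phi (intRN Omega (fun x => (Phi (grad_norm u x))%:E)))%E.
Proof.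
move=> [phi [phi_nd [_ [phi_eq0 Phi_int]]]] [psi [psi_nd [_ [psi_eq0 Psi_int]]]] _ _
  conj_fin [Kp [Kp_gt1 conj_Kp]] [Ks [Ks_gt1 Psi_Ks]].
have Kp_ge0 : 0 <= Kp := le_trans ler01 (ltW Kp_gt1).
have c_gt0 : 0 < Kp + 1 by rewrite ltr_wpDl.
have Ks_gt0 : 0 < Ks := lt_trans ltr01 Ks_gt1.
have Phi_mul := Phi_supermul phi_nd phi_eq0 Phi_int conj_fin conj_Kp Kp_ge0.
exists (Ks * (Kp + 1)); split=> [|N Omega g C1 _ _ g_ge0 C1_gt0 poincare u u_C1c].
  exact: mulr_gt0.
set B := intRN Omega (fun x => (Phi (grad_norm u x))%:E).
have : (0 <= B)%E.
  by apply: intRN_ge0 => x _; rewrite lee_fin (Phi_ge0 phi_nd phi_eq0 Phi_int) ?sqrtr_ge0.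
case E : B => [b| |] //= b_ge0; last by rewrite mulry gtr0_sg ?mul1e ?leey// !mulr_gt0.
have grad_le := lux_grad_le_young_inv phi_nd phi_eq0 Phi_int c_gt0 Phi_mul E.
have lux_le : (lux_weighted Psi Omega g u <= (C1 * ((Kp + 1) * young_inv Phi b))%:E)%E.
  by apply: le_trans (poincare u u_C1c) _; rewrite EFinM lee_pmul2l ?lte_fin.
have -> : ((Ks * (Kp + 1) * C1)%:E * (young_inv Phi b)%:E
    = (Ks * (C1 * ((Kp + 1) * young_inv Phi b)))%:E)%E by rewrite -EFinM; congr EFin; ring.
rewrite lee_fin in b_ge0.
apply: (young_einv_weighted_le psi_nd psi_eq0 Psi_int (ltW Ks_gt1) Psi_Ks g_ge0 _ lux_le).
have s_ge0 := young_inv_ge0 phi_nd phi_eq0 Phi_int b_ge0.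
exact: mulr_ge0 (ltW C1_gt0) (mulr_ge0 (ltW c_gt0) s_ge0).
Qed.
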